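(* Let $\mathcal{S}$ be a discrete state space, $\mathcal{A}$ a finite action space, $\mathcal{R}=[-1,1]^{\mathcal{S}\times\mathcal{A}}$, $\Pi$ the set of functions $\mathcal{S}\to\mathcal{A}$, $\mathcal{P}$ the set of planners $p:\mathcal{R}\to\Pi$, and let $\dot\pi\in\Pi$. Let $L$ be a computer language (universal Turing machine) with Kolmogorov complexity $K_L$, let $c\ge 0$, and suppose $L$ is $c$-reasonable for $F$, i.e. $$\max_{(p,R)\in\mathcal{P}\times\mathcal{R},\ F_i\in F}\big(K_L(F_i(p,R))-K_L(p,R)\big)\le c.$$ Then each of the pairs $(p_{\dot\pi},0)$, $(p_g,R_{\dot\pi})$ and $(-p_g,-R_{\dot\pi})$ is compatible with $\dot\pi$ and is amongst the pairs of lowest complexity among the pairs compatible with $\dot\pi$, in the sense that for each such pair $(p',R')$, $$\Big|K_L(p',R')-\min_{(p,R)\in\mathcal{P}\times\mathcal{R}:\ p(R)=\dot\pi}K_L(p,R)\Big|\le c.$$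
   Context: A planner-reward pair $(p,R)$ is compatible with $\dot\pi$ if $p(R)=\dot\pi$. $K_L(x)$ denotes the length of the shortest program in $L$ that generates (a description of) the object $x$. Notation: $0$ is the zero reward; $p_\pi$ is the planner with $p_\pi(R)=\pi$ for all $R$; $R_\pi(s,a)=1$ if $\pi(s)=a$ and $0$ otherwise; $p_g(R)(s)=\arg\max_a R(s,a)$; for a planner $p$, $-p$ is the planner $(-p)(R)=p(-R)$; $-R$ is the pointwise negative of $R$. Basic operations: $f_1(p)=(p,0)$; $f_2(R)=(p_g,R)$; $f_3(p,R)=p(R)$; $f_4(p,R)=(-p,-R)$; $f_5(\pi)=p_\pi$; $f_6(\pi)=R_\pi$. The set $F=\{F_1,F_2,F_3,F_4\}$ consists of $F_1=f_1\circ f_5\circ f_3$, $F_2=f_2\circ f_6\circ f_3$, $F_3=f_4\circ f_2\circ f_6\circ f_3$, $F_4=f_4$, each mapping planner-reward pairs to planner-reward pairs. *)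

From HB Require Import structures.
From mathcomp Require Import all_boot all_order all_algebra.
From mathcomp Require Import Rstruct.
From Stdlib Require Import Reals.

Set Implicit Arguments.
Unset Strict Implicit.
Unset Printing Implicit Defensive.

Section IRL.
Variables (S : Type) (A : finType).

Definition reward := {r : S -> A -> R | forall s a, (-1 <= r s a <= 1)%R}.
Definition rfun (r : reward) : S -> A -> R := proj1_sig r.

Definition policy := S -> A.
Definition planner := reward -> policy.

Definition zero_reward : reward.
Proof.
  exists (fun _ _ => 0%R); intros; split; [apply Rlt_le, Ropp_lt_gt_0_contravar, Rlt_0_1 | apply Rle_0_1].
Defined.

Definition neg_reward (r : reward) : reward.
Proof.
  exists (fun s a => (- rfun r s a)%R).
  intros s a; destruct (proj2_sig r s a) as [h1 h2]; unfold rfun; split.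
  - apply Ropp_le_contravar; exact h2.
  - rewrite <- (Ropp_involutive 1%R); apply Ropp_le_contravar; exact h1.
Defined.

Definition R_pi (pi : policy) : reward.
Proof.
  exists (fun s a => if pi s == a then 1%R else 0%R).
  intros s a; destruct (pi s == a); split;
    try (apply Rlt_le, Ropp_lt_gt_0_contravar, Rlt_0_1);
    try apply Rle_0_1; try apply Rle_refl.
  apply Rle_trans with 0%R; [apply Rlt_le, Ropp_lt_gt_0_contravar, Rlt_0_1 | apply Rle_0_1].
Defined.

Definition p_pi (pi : policy) : planner := fun _ => pi.

(* p_g(R)(s) = argmax_a R(s,a); ties broken by the generic arg max of
   order.v, with default/starting point a0 (A is finite and nonempty). *)
Definition p_g (a0 : A) : planner :=
  fun r s => [arg max_(a > a0) (rfun r s a : R)]%O.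

Definition neg_planner (p : planner) : planner := fun r => p (neg_reward r).

Definition f1 (p : planner) : planner * reward := (p, zero_reward).
Definition f2 (a0 : A) (r : reward) : planner * reward := (p_g a0, r).
Definition f3 (pr : planner * reward) : policy := pr.1 pr.2.
Definition f4 (pr : planner * reward) : planner * reward :=
  (neg_planner pr.1, neg_reward pr.2).
Definition f5 (pi : policy) : planner := p_pi pi.
Definition f6 (pi : policy) : reward := R_pi pi.

Definition F1 (pr : planner * reward) := f1 (f5 (f3 pr)).
Definition F2 (a0 : A) (pr : planner * reward) := f2 a0 (f6 (f3 pr)).
Definition F3 (a0 : A) (pr : planner * reward) := f4 (f2 a0 (f6 (f3 pr))).
Definition F4 (pr : planner * reward) := f4 pr.

Definition Fset (a0 : A) : list (planner * reward -> planner * reward) :=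
  [:: F1; F2 a0; F3 a0; F4].

Definition compatible (pi : policy) (pr : planner * reward) : Prop :=
  pr.1 pr.2 = pi.

Definition c_reasonable (a0 : A) (K : planner * reward -> nat) (c : R) : Prop :=
  forall (pr : planner * reward) (Fi : planner * reward -> planner * reward),
    List.In Fi (Fset a0) -> (INR (K (Fi pr)) - INR (K pr) <= c)%R.

Definition is_min_compatible (K : planner * reward -> nat) (pi : policy) (m : nat) : Prop :=
  (exists pr, compatible pi pr /\ K pr = m) /\
  (forall pr, compatible pi pr -> (m <= K pr)%nat).

End IRL.

(* Each of F1, F2, F3 reads a pair (p, R) only through the policy p(R), so it
   sends every pair compatible with pidot to the same pair, namely the first,
   second and third candidate respectively.  Applied to a pair of minimal
   complexity m, c-reasonableness gives K(candidate) <= m + c, while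
   m <= K(candidate) because the candidates are themselves compatible: the
   greedy planner recovers pidot from R_pidot, and -p_g undoes the negation. *)
From mathcomp Require Import all_boot all_order.
From mathcomp Require Import Rstruct.
From Stdlib Require Import Reals Lra FunctionalExtensionality.

Set Implicit Arguments.
Unset Strict Implicit.

Section Compatibility.
Variables (S : Type) (A : finType) (a0 : A) (pi : policy S A).

Lemma p_g_strict_argmax (r : reward S A) :
  (forall s a, a != pi s -> (rfun r s a < rfun r s (pi s))%R) -> p_g a0 r = pi.
Proof.
move=> r_max; apply: functional_extensionality => s.
rewrite /p_g; case: Order.TotalTheory.arg_maxP => //= a _ a_max.
apply/eqP; apply: contraT => /negPf ne_a.
have /RleP := a_max (pi s) isT.
have := r_max s a; rewrite ne_a => /(_ isT); lra.
Qed.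

Lemma compatible_p_pi : compatible pi (p_pi pi, zero_reward S A).
Proof. by []. Qed.

Lemma compatible_p_g_R_pi : compatible pi (p_g a0, R_pi pi).
Proof.
apply: p_g_strict_argmax => s a; rewrite /= eqxx eq_sym => /negPf ->; lra.
Qed.

Lemma compatible_neg_p_g_R_pi :
  compatible pi (neg_planner (p_g a0), neg_reward (R_pi pi)).
Proof.
apply: p_g_strict_argmax => s a; rewrite /= eqxx eq_sym => /negPf ->; lra.
Qed.

Lemma F1_compatible (q : planner S A * reward S A) :
  compatible pi q -> F1 q = (p_pi pi, zero_reward S A).
Proof. by rewrite /compatible /F1 /f3 => ->. Qed.

Lemma F2_compatible (q : planner S A * reward S A) :
  compatible pi q -> F2 a0 q = (p_g a0, R_pi pi).
Proof. by rewrite /compatible /F2 /f3 => ->. Qed.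

Lemma F3_compatible (q : planner S A * reward S A) :
  compatible pi q -> F3 a0 q = (neg_planner (p_g a0), neg_reward (R_pi pi)).
Proof. by rewrite /compatible /F3 /f3 => ->. Qed.

End Compatibility.

Lemma c_reasonable_image_near_min (S : Type) (A : finType) (a0 : A)
    (pi : policy S A) (K : planner S A * reward S A -> nat) (c : R)
    (Fi : planner S A * reward S A -> planner S A * reward S A)
    (pr : planner S A * reward S A) (m : nat) :
  (0 <= c)%R -> c_reasonable a0 K c -> List.In Fi (Fset S a0) ->
  (forall q, compatible pi q -> Fi q = pr) -> compatible pi pr ->
  is_min_compatible K pi m -> (Rabs (INR (K pr) - INR m) <= c)%R.
Proof.
move=> c_ge0 reasonable Fi_in Fi_const pr_comp [[q [q_comp Kq]] m_min].
have K_le : (INR (K pr) - INR m <= c)%R.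
  by rewrite -(Fi_const q q_comp) -Kq; exact: reasonable.
have m_le : (INR m <= INR (K pr))%R by apply/le_INR/leP/m_min.
by apply: Rabs_le; lra.
Qed.

Theorem proposition3 (S : Type) (A : finType) (a0 : A) (pidot : S -> A)
    (K : planner S A * reward S A -> nat) (c : R)
    (hc : (0 <= c)%R) (hreas : c_reasonable a0 K c) :
  forall pr : planner S A * reward S A,
    List.In pr [:: (p_pi pidot, zero_reward S A);
                   (p_g a0, R_pi pidot);
                   (neg_planner (p_g a0), neg_reward (R_pi pidot))] ->
    compatible pidot pr /\
    (forall m : nat, is_min_compatible K pidot m ->
       (Rabs (INR (K pr) - INR m) <= c)%R).
Proof.
move=> pr [<-|[<-|[<-|[]]]]; split=> [|m].
- exact: compatible_p_pi.
- apply: (c_reasonable_image_near_min (Fi := @F1 S A) hc hreas).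
  + by left.
  + exact: F1_compatible.
  + exact: compatible_p_pi.
- exact: compatible_p_g_R_pi.
- apply: (c_reasonable_image_near_min (Fi := @F2 S A a0) hc hreas).
  + by right; left.
  + exact: F2_compatible.
  + exact: compatible_p_g_R_pi.
- exact: compatible_neg_p_g_R_pi.
- apply: (c_reasonable_image_near_min (Fi := @F3 S A a0) hc hreas).
  + by right; right; left.
  + exact: F3_compatible.
  + exact: compatible_neg_p_g_R_pi.
Qed.
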